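(* (i) For any positive integers $v_1, v_2$, either $\mathrm{ML}(v_1,v_2)=\frac{s}{2s+1}$ for some $s\in\mathbb{N}$, or $\mathrm{ML}(v_1,v_2)=\frac12$. (ii) For any positive integers $v_1,v_2,v_3$, either $\mathrm{ML}(v_1,v_2,v_3)=\frac{s}{3s+1}$ for some $s\in\mathbb{N}$, or $\mathrm{ML}(v_1,v_2,v_3)\ge \frac13$.
   Context: For a real number $x$, $\Vert x\Vert$ denotes the distance from $x$ to the nearest integer. For positive integers $v_1,\ldots,v_n$, the maximum loneliness is $\mathrm{ML}(v_1,\ldots,v_n)=\max_{t\in\mathbb{R}}\min_{1\le i\le n}\Vert t v_i\Vert$. Here $\mathbb{N}=\{1,2,3,\ldots\}$. *)

From Stdlib Require Import Reals Lra Lia List.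
Open Scope R_scope.

Definition dist_int (x : R) : R :=
  Rmin (x - IZR (Int_part x)) (1 - (x - IZR (Int_part x))).

Definition min_dist (t : R) (v : list nat) : R :=
  match v with
  | nil => 0
  | v0 :: vs => fold_left (fun acc vi => Rmin acc (dist_int (t * INR vi))) vs
                          (dist_int (t * INR v0))
  end.

Definition is_ML (v : list nat) (m : R) : Prop :=
  (exists t : R, min_dist t v = m) /\ (forall t : R, min_dist t v <= m).

From Stdlib Require Import Reals Lra Lia List ZArith Classical.
Open Scope R_scope.

(* The maximum exists because [t |-> min_i ||t v_i||] is Lipschitz and 1-periodic.

   Two speeds [g a], [g b] with [gcd a b = 1]: if [a] and [b] are odd, [t = 1/(2g)] gives [1/2].
   Otherwise [n = a + b = 2s + 1]; the value [s/n] is attained at a Bezout time, and it cannot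
   be exceeded: [t g a] and [t g b] would both lie within [1/(2n)] of half-integers, making the
   odd integer [2 (a P2 - b P1) + a - b] smaller than 1 in absolute value.

   Three speeds with maximum [m < 1/3]: at a maximizing time one speed sits [m] past an integer
   and another [m] before one, since otherwise a small shift of [t] raises all three distances.
   Once the three speeds are divided by their gcd, write these two as [g a], [g b] with
   [gcd a b = 1]; then [gcd g z = 1] for the third speed [z]. The maximizer is then [L / (g n)] with [n = a + b], and [m = c/n] with [3c < n].
   If [n <> 3c + 1], maximality says that whenever [L' a] is farther than [c] from [n Z], the
   product [L' z] lies within [g c - 1] of [g n Z]. Taking [L' = r a^-1 (mod n)] for
   [c < r < n - c]: for [g >= 3] this fails at once, because adding multiples of [n] to [L']
   moves [L' z] to any point of its class modulo [n], in particular close to [g n / 2]; for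
   [g = 1] and [g = 2] it confines the arithmetic progression [r a^-1 z] to short windows
   modulo [n], resp. [2n], around few points, and a progression that never jumps between
   windows has too small a step to run through so many terms. *)

Lemma frac_part_bounds (x : R) : 0 <= x - IZR (Int_part x) < 1.
Proof. destruct (base_Int_part x); lra. Qed.

Lemma dist_int_le_half x : dist_int x <= 1/2.
Proof.
  unfold dist_int, Rmin; pose proof (frac_part_bounds x); destruct Rle_dec; lra.
Qed.

Lemma dist_int_attained x : exists k : Z, dist_int x = Rabs (x - IZR k).
Proof.
  unfold dist_int, Rmin; pose proof (frac_part_bounds x); destruct Rle_dec.
  - exists (Int_part x). rewrite Rabs_right; lra.
  - exists (Int_part x + 1)%Z. rewrite plus_IZR, Rabs_left1; lra.
Qed.

Lemma dist_int_le x (k : Z) : dist_int x <= Rabs (x - IZR k).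
Proof.
  unfold dist_int, Rmin; pose proof (frac_part_bounds x).
  destruct (Z_le_gt_dec k (Int_part x)) as [Hk|Hk].
  - apply IZR_le in Hk. rewrite Rabs_right by lra. destruct Rle_dec; lra.
  - assert (IZR (Int_part x + 1) <= IZR k) as Hk' by (apply IZR_le; lia).
    rewrite plus_IZR in Hk'. rewrite Rabs_left1 by lra. destruct Rle_dec; lra.
Qed.

Lemma dist_int_glb x B : (forall k : Z, B <= Rabs (x - IZR k)) -> B <= dist_int x.
Proof. intros H. destruct (dist_int_attained x) as [k ->]. apply H. Qed.

Lemma dist_int_lipschitz x y : dist_int x <= dist_int y + Rabs (x - y).
Proof.
  destruct (dist_int_attained y) as [k Hk]. pose proof (dist_int_le x k).
  pose proof (Rabs_triang (x - y) (y - IZR k)).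
  replace (x - y + (y - IZR k)) with (x - IZR k) in * by ring. lra.
Qed.

Lemma dist_int_le_of x y :
  (forall k : Z, exists j : Z, Rabs (x - IZR j) <= Rabs (y - IZR k)) -> dist_int x <= dist_int y.
Proof.
  intros H. destruct (dist_int_attained y) as [k ->]. destruct (H k) as [j Hj].
  pose proof (dist_int_le x j). lra.
Qed.

Lemma dist_int_add_IZR x (k : Z) : dist_int (x + IZR k) = dist_int x.
Proof.
  apply Rle_antisym; apply dist_int_le_of; intros j.
  - exists (j + k)%Z. rewrite plus_IZR. right. f_equal. ring.
  - exists (j - k)%Z. rewrite minus_IZR. right. f_equal. ring.
Qed.

Lemma dist_int_opp x : dist_int (- x) = dist_int x.
Proof.
  apply Rle_antisym; apply dist_int_le_of; intros j; exists (- j)%Z;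
    rewrite opp_IZR, <- Rabs_Ropp; right; f_equal; ring.
Qed.

Lemma dist_int_IZR_add_small k y : 0 <= y <= 1/2 -> dist_int (IZR k + y) = y.
Proof.
  intros Hy. apply Rle_antisym.
  - pose proof (dist_int_le (IZR k + y) k). rewrite Rabs_right in H; lra.
  - apply dist_int_glb. intros j. destruct (Z_le_gt_dec j k) as [Hjk|Hjk].
    + apply IZR_le in Hjk. rewrite Rabs_right; lra.
    + assert (IZR (k + 1) <= IZR j) as Hj by (apply IZR_le; lia).
      rewrite plus_IZR in Hj. rewrite Rabs_left1; lra.
Qed.

Lemma dist_int_IZR_sub_small k y : 0 <= y <= 1/2 -> dist_int (IZR k - y) = y.
Proof.
  intros Hy. rewrite <- dist_int_opp.
  replace (- (IZR k - y)) with (IZR (- k) + y) by (rewrite opp_IZR; ring).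
  now apply dist_int_IZR_add_small.
Qed.

Lemma dist_int_lipschitz_mul x y a :
  dist_int (x * a) <= dist_int (y * a) + Rabs a * Rabs (x - y).
Proof.
  pose proof (dist_int_lipschitz (x * a) (y * a)).
  replace (x * a - y * a) with (a * (x - y)) in H by ring. rewrite Rabs_mult in H. lra.
Qed.

Lemma fold_left_Rmin_le (f g : nat -> R) e (l : list nat) acc1 acc2 :
  (forall n, In n l -> f n <= g n + e) -> acc1 <= acc2 + e ->
  fold_left (fun acc n => Rmin acc (f n)) l acc1 <=
  fold_left (fun acc n => Rmin acc (g n)) l acc2 + e.
Proof.
  revert acc1 acc2. induction l as [|n l IH]; intros acc1 acc2 Hfg Hacc; simpl; [exact Hacc|].
  apply IH; [intros i Hi; apply Hfg; now right|].
  pose proof (Hfg n (or_introl eq_refl)). unfold Rmin; repeat destruct Rle_dec; lra.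
Qed.

Lemma min_dist_le_of_pointwise x y e (v : list nat) : 0 <= e ->
  (forall n, In n v -> dist_int (x * INR n) <= dist_int (y * INR n) + e) ->
  min_dist x v <= min_dist y v + e.
Proof.
  intros He H. destruct v as [|n v]; simpl; [lra|].
  apply fold_left_Rmin_le; [intros i Hi; apply H; now right|apply H; now left].
Qed.

Lemma le_list_sum n (l : list nat) : In n l -> (n <= list_sum l)%nat.
Proof.
  induction l as [|i l IH]; simpl; [tauto|]. intros [->|Hn]; [lia|]. specialize (IH Hn). lia.
Qed.

Lemma min_dist_lipschitz x y v :
  min_dist x v <= min_dist y v + INR (list_sum v) * Rabs (x - y).
Proof.
  apply min_dist_le_of_pointwise.
  - apply Rmult_le_pos; [apply pos_INR|apply Rabs_pos].
  - intros n Hn. eapply Rle_trans; [apply dist_int_lipschitz_mul|].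
    rewrite Rabs_right by (apply Rle_ge, pos_INR). apply Rplus_le_compat_l.
    apply Rmult_le_compat_r; [apply Rabs_pos|]. apply le_INR, le_list_sum, Hn.
Qed.

Lemma min_dist_add_IZR t (k : Z) v : min_dist (t + IZR k) v = min_dist t v.
Proof.
  assert (Hn : forall n, dist_int ((t + IZR k) * INR n) = dist_int (t * INR n)).
  { intros n. rewrite <- (dist_int_add_IZR (t * INR n) (k * Z.of_nat n)).
    f_equal. rewrite mult_IZR, <- INR_IZR_INZ. ring. }
  apply Rle_antisym; [apply Rle_trans with (min_dist t v + 0)
                    |apply Rle_trans with (min_dist (t + IZR k) v + 0)]; try lra;
    apply min_dist_le_of_pointwise; try lra; intros n _; rewrite Hn; lra.
Qed.

Lemma continuity_pt_of_lipschitz (f : R -> R) K :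
  (forall x y, f x <= f y + K * Rabs (x - y)) -> forall x, continuity_pt f x.
Proof.
  intros Hf x0 eps Heps. set (K' := Rabs K + 1).
  assert (HK' : 0 < K') by (unfold K'; pose proof (Rabs_pos K); lra).
  exists (eps / K'). split; [apply Rdiv_lt_0_compat; lra|].
  intros x [_ Hx]. simpl in *. unfold R_dist in *.
  assert (Hd : K * Rabs (x - x0) < eps).
  { apply Rle_lt_trans with (K' * Rabs (x - x0)).
    - apply Rmult_le_compat_r; [apply Rabs_pos|]. pose proof (Rle_abs K). unfold K'. lra.
    - apply Rmult_lt_reg_l with (/ K'); [now apply Rinv_0_lt_compat|].
      rewrite <- Rmult_assoc, Rinv_l, Rmult_1_l by lra. unfold Rdiv in Hx. lra. }
  pose proof (Hf x x0). pose proof (Hf x0 x). rewrite Rabs_minus_sym in H0.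
  apply Rabs_def1; lra.
Qed.

Lemma ML_exists (v : list nat) : exists m, is_ML v m.
Proof.
  destruct (continuity_ab_maj (fun t => min_dist t v) 0 1) as [th [Hth _]]; [lra| |].
  - intros t _. apply (continuity_pt_of_lipschitz _ _ (fun x y => min_dist_lipschitz x y v)).
  - exists (min_dist th v). split; [now exists th|]. intros t.
    rewrite <- (min_dist_add_IZR t (- Int_part t)), opp_IZR.
    pose proof (frac_part_bounds t). apply Hth. lra.
Qed.

Definition min_dist2 (a b t : R) : R := Rmin (dist_int (t * a)) (dist_int (t * b)).

Lemma gcd_factor X Y : (0 < X)%Z -> (0 < Y)%Z -> exists g a b, (0 < g)%Z /\ (0 < a)%Z /\
  (0 < b)%Z /\ X = (g * a)%Z /\ Y = (g * b)%Z /\ Z.gcd a b = 1%Z /\ g = Z.gcd X Y.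
Proof.
  intros HX HY. set (g := Z.gcd X Y).
  assert (Hg : (0 < g)%Z).
  { pose proof (Z.gcd_nonneg X Y). destruct (Z.eq_dec g 0) as [E|E]; [|lia].
    apply Z.gcd_eq_0 in E. lia. }
  destruct (Z.gcd_divide_l X Y) as [a Ha]. destruct (Z.gcd_divide_r X Y) as [b Hb].
  fold g in Ha, Hb. exists g, a, b.
  assert (0 < a)%Z by nia. assert (0 < b)%Z by nia. repeat split; try lia.
  pose proof (Z.gcd_mul_mono_l a b g) as E. rewrite Z.abs_eq in E by lia.
  replace (g * a)%Z with X in E by lia. replace (g * b)%Z with Y in E by lia.
  pose proof (Z.gcd_nonneg a b). fold g in E. nia.
Qed.

Lemma dist_int_near_half y b : b < dist_int y -> exists P : Z, Rabs (y - IZR P - 1/2) < 1/2 - b.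
Proof.
  intros H. pose proof (dist_int_le_half y). destruct (dist_int_attained y) as [k Hk].
  rewrite Hk in *. destruct (Rcase_abs (y - IZR k)).
  - rewrite Rabs_left in * by lra. exists (k - 1)%Z. rewrite minus_IZR, Rabs_right; lra.
  - rewrite Rabs_right in * by lra. exists k. rewrite Rabs_left1; lra.
Qed.

Lemma min_dist2_le_odd_sum (g a b s : Z) t : (0 < g)%Z -> (0 < a)%Z -> (0 < b)%Z ->
  (a + b = 2 * s + 1)%Z -> min_dist2 (IZR (g * a)) (IZR (g * b)) t <= IZR s / IZR (a + b).
Proof.
  intros Hg Ha Hb Hn. assert (Rn : 0 < IZR (a + b)) by (apply IZR_lt; lia).
  apply Rnot_lt_le. intros Hlt. unfold min_dist2 in Hlt.
  destruct (dist_int_near_half (t * IZR (g * a)) (IZR s / IZR (a + b))) as [P1 H1];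
    [eapply Rlt_le_trans; [apply Hlt|apply Rmin_l]|].
  destruct (dist_int_near_half (t * IZR (g * b)) (IZR s / IZR (a + b))) as [P2 H2];
    [eapply Rlt_le_trans; [apply Hlt|apply Rmin_r]|].
  assert (E : 1/2 - IZR s / IZR (a + b) = 1 / (2 * IZR (a + b))).
  { rewrite Hn. rewrite Hn in Rn. rewrite plus_IZR, mult_IZR in *. field. lra. }
  rewrite E in H1, H2. apply Rabs_def2 in H1, H2.
  (* [b (t g a - P1 - 1/2) - a (t g b - P2 - 1/2)] is half an odd integer, yet of size < 1/2. *)
  set (z := (2 * (a * P2 - b * P1) + a - b)%Z).
  assert (Ez : IZR z = 2 * (IZR b * (t * IZR (g * a) - IZR P1 - 1/2)
                            - IZR a * (t * IZR (g * b) - IZR P2 - 1/2))).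
  { unfold z. rewrite !minus_IZR, !plus_IZR, !mult_IZR, !minus_IZR, !mult_IZR. field. }
  assert (Rabs (IZR z) < 1).
  { assert (Ra : 0 < IZR a) by (apply IZR_lt; lia). assert (Rb : 0 < IZR b) by (apply IZR_lt; lia).
    assert (Hq : (IZR a + IZR b) * (1 / (2 * IZR (a + b))) = 1/2)
      by (rewrite <- plus_IZR; field; lra).
    rewrite Ez. apply Rabs_def1; nra. }
  apply Rabs_def2 in H. destruct H as [Hz1 Hz2].
  apply lt_IZR in Hz1. apply (lt_IZR (-1)) in Hz2. unfold z in *. lia.
Qed.

Lemma min_dist2_attains_odd_sum (g a b s : Z) : (0 < g)%Z -> (0 < a)%Z -> (0 < b)%Z ->
  (0 <= s)%Z -> Z.gcd a b = 1%Z -> (a + b = 2 * s + 1)%Z ->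
  exists t, min_dist2 (IZR (g * a)) (IZR (g * b)) t = IZR s / IZR (a + b).
Proof.
  intros Hg Ha Hb Hs Hab Hn. destruct (Z.gcd_bezout a b 1 Hab) as [al [be Hbez]].
  assert (Rn : IZR (a + b) <> 0) by (apply not_0_IZR; lia).
  assert (Hsn : 0 <= IZR s / IZR (a + b) <= 1/2).
  { rewrite Hn, plus_IZR, mult_IZR. apply IZR_le in Hs. unfold Rdiv. split.
    - apply Rmult_le_pos; [lra|left; apply Rinv_0_lt_compat; lra].
    - apply Rmult_le_reg_r with (2 * IZR s + 1); [lra|].
      rewrite Rmult_assoc, Rinv_l by lra. lra. }
  (* with [al a + be b = 1], the time [s (al - be) / (g (a + b))] puts [g a] at [s/(a+b)]
     past an integer and [g b] at [s/(a+b)] before one. *)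
  exists (IZR (s * (al - be)) / IZR (g * (a + b))).
  assert (Hmul : forall v, IZR (s * (al - be)) / IZR (g * (a + b)) * IZR (g * v)
                           = IZR (s * (al - be) * v) / IZR (a + b)).
  { intros v. rewrite !mult_IZR. field. split; [exact Rn|apply not_0_IZR; lia]. }
  unfold min_dist2. rewrite !Hmul.
  replace (IZR (s * (al - be) * a) / IZR (a + b)) with (IZR (- (s * be)) + IZR s / IZR (a + b)).
  2:{ replace (s * (al - be) * a)%Z with (- (s * be) * (a + b) + s)%Z by nia.
      rewrite (plus_IZR (_ * _)), (mult_IZR _ (a + b)). field. exact Rn. }
  replace (IZR (s * (al - be) * b) / IZR (a + b)) with (IZR (s * al) - IZR s / IZR (a + b)).
  2:{ replace (s * (al - be) * b)%Z with (s * al * (a + b) - s)%Z by nia.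
      rewrite (minus_IZR (_ * _)), (mult_IZR _ (a + b)). field. exact Rn. }
  rewrite dist_int_IZR_add_small, dist_int_IZR_sub_small by exact Hsn. apply Rmin_left; lra.
Qed.

Lemma min_dist2_attains_half (g a b : Z) : (0 < g)%Z -> Z.Odd a -> Z.Odd b ->
  exists t, min_dist2 (IZR (g * a)) (IZR (g * b)) t = 1/2.
Proof.
  intros Hg [a' ->] [b' ->]. assert (Rg : IZR g <> 0) by (apply not_0_IZR; lia).
  exists (/ (2 * IZR g)). unfold min_dist2.
  assert (Hodd : forall k, / (2 * IZR g) * IZR (g * (2 * k + 1)) = IZR k + 1/2).
  { intros k. rewrite mult_IZR, plus_IZR, mult_IZR. field. exact Rg. }
  rewrite !Hodd, !dist_int_IZR_add_small by lra. apply Rmin_left; lra.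
Qed.

Lemma ML2_values (X Y : Z) m : (0 < X)%Z -> (0 < Y)%Z ->
  (exists t, min_dist2 (IZR X) (IZR Y) t = m) -> (forall t, min_dist2 (IZR X) (IZR Y) t <= m) ->
  (exists s : Z, (1 <= s)%Z /\ m = IZR s / (2 * IZR s + 1)) \/ m = 1/2.
Proof.
  intros HX HY [th <-] Hmax.
  destruct (gcd_factor X Y HX HY) as (g & a & b & Hg & Ha & Hb & -> & -> & Hab & _).
  destruct (Z.Even_or_Odd (a + b)) as [[s Hs]|[s Hs]].
  - right. apply Rle_antisym; [apply Rle_trans with (1 := Rmin_l _ _); apply dist_int_le_half|].
    assert (Ha2 : Z.Odd a).
    { destruct (Z.Even_or_Odd a) as [[a' Ea]|]; auto. exfalso.
      assert (H2 : (2 | Z.gcd a b)%Z) by (apply Z.gcd_greatest; [exists a'|exists (s - a')%Z]; lia).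
      rewrite Hab in H2. destruct H2 as [k Hk]. lia. }
    assert (Hb2 : Z.Odd b) by (destruct Ha2 as [a' Ea]; exists (s - a' - 1)%Z; lia).
    destruct (min_dist2_attains_half g a b Hg Ha2 Hb2) as [t <-]. apply Hmax.
  - left. exists s. split; [lia|].
    replace (2 * IZR s + 1) with (IZR (a + b)) by (rewrite Hs, plus_IZR, mult_IZR; ring).
    apply Rle_antisym; [apply min_dist2_le_odd_sum; auto|].
    destruct (min_dist2_attains_odd_sum g a b s Hg Ha Hb ltac:(lia) Hab Hs) as [t <-]. apply Hmax.
Qed.

Definition min_dist3 (a b c t : R) : R :=
  Rmin (Rmin (dist_int (t * a)) (dist_int (t * b))) (dist_int (t * c)).

Lemma min_dist3_le_each a b c t : min_dist3 a b c t <= dist_int (t * a) /\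
  min_dist3 a b c t <= dist_int (t * b) /\ min_dist3 a b c t <= dist_int (t * c).
Proof. unfold min_dist3, Rmin. repeat split; repeat destruct Rle_dec; lra. Qed.

Definition int_plus (m y : R) : Prop := exists k : Z, y = IZR k + m.
Definition int_minus (m y : R) : Prop := exists k : Z, y = IZR k - m.

Lemma int_plus_minus_exclusive m y : 0 < m < 1/2 -> int_plus m y -> int_minus m y -> False.
Proof.
  intros Hm [k Hk] [j Hj]. assert (E : IZR (j - k) = 2 * m) by (rewrite minus_IZR; lra).
  assert (H0 : IZR 0 < IZR (j - k)) by lra. assert (H1 : IZR (j - k) < IZR 1) by lra.
  apply lt_IZR in H0, H1. lia.
Qed.

Lemma int_minus_opp m y : int_minus m y -> int_plus m (- y).
Proof. intros [k ->]. exists (- k)%Z. rewrite opp_IZR. ring. Qed.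

Lemma dist_int_ge_level m y :
  m <= dist_int y -> m < dist_int y \/ int_plus m y \/ int_minus m y.
Proof.
  intros H. destruct (Rle_lt_or_eq_dec _ _ H) as [|E]; [now left|right].
  destruct (dist_int_attained y) as [k Hk]. rewrite <- E in Hk.
  destruct (Rcase_abs (y - IZR k)).
  - right. exists k. rewrite Rabs_left in Hk; lra.
  - left. exists k. rewrite Rabs_right in Hk; lra.
Qed.

Lemma dist_int_exceeds_right m y : 0 < m < 1/2 -> int_plus m y \/ m < dist_int y ->
  exists e, 0 < e /\ forall h, 0 < h < e -> m < dist_int (y + h).
Proof.
  intros Hm [[k ->]|Hy].
  - exists (1/2 - m). split; [lra|]. intros h Hh.
    replace (IZR k + m + h) with (IZR k + (m + h)) by ring. rewrite dist_int_IZR_add_small; lra.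
  - exists (dist_int y - m). split; [lra|]. intros h Hh.
    pose proof (dist_int_lipschitz y (y + h)) as H.
    replace (y - (y + h)) with (- h) in H by ring. rewrite Rabs_Ropp, Rabs_right in H; lra.
Qed.

Lemma min_dist3_exceeds_right a b c t m : 0 < a -> 0 < b -> 0 < c -> 0 < m < 1/2 ->
  int_plus m (t * a) \/ m < dist_int (t * a) ->
  int_plus m (t * b) \/ m < dist_int (t * b) ->
  int_plus m (t * c) \/ m < dist_int (t * c) ->
  exists t', m < min_dist3 a b c t'.
Proof.
  intros Ha Hb Hc Hm Ia Ib Ic.
  destruct (dist_int_exceeds_right m _ Hm Ia) as (ea & Hea & Ea).
  destruct (dist_int_exceeds_right m _ Hm Ib) as (eb & Heb & Eb).
  destruct (dist_int_exceeds_right m _ Hm Ic) as (ec & Hec & Ec).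
  set (e := Rmin ea (Rmin eb ec)).
  assert (He : 0 < e) by (apply Rmin_pos; [|apply Rmin_pos]; assumption).
  assert (e <= ea /\ e <= eb /\ e <= ec) as (Hea' & Heb' & Hec').
  { unfold e, Rmin. repeat destruct Rle_dec; lra. }
  set (h := e / (2 * (a + b + c))).
  assert (Hh : 0 < h) by (apply Rdiv_lt_0_compat; lra).
  assert (Hh2 : h * (2 * (a + b + c)) = e) by (unfold h; field; lra).
  exists (t + h). unfold min_dist3. rewrite !Rmult_plus_distr_r.
  apply Rmin_glb_lt; [apply Rmin_glb_lt|]; [apply Ea|apply Eb|apply Ec]; nra.
Qed.

Lemma min_dist3_exceeds_left a b c t m : 0 < a -> 0 < b -> 0 < c -> 0 < m < 1/2 ->
  int_minus m (t * a) \/ m < dist_int (t * a) ->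
  int_minus m (t * b) \/ m < dist_int (t * b) ->
  int_minus m (t * c) \/ m < dist_int (t * c) ->
  exists t', m < min_dist3 a b c t'.
Proof.
  intros Ha Hb Hc Hm Ia Ib Ic. apply (min_dist3_exceeds_right a b c (- t) m); auto;
    rewrite <- Ropp_mult_distr_l, dist_int_opp;
    [destruct Ia|destruct Ib|destruct Ic]; auto using int_minus_opp.
Qed.

Section Maximizer.

Variables (a b c m : R).
Hypotheses (Ha : 0 < a) (Hb : 0 < b) (Hc : 0 < c) (Hm : 0 < m < 1/2).
Hypothesis Hmax : forall t, min_dist3 a b c t <= m.

Lemma maximizer_levels th : min_dist3 a b c th = m ->
  (int_plus m (th * a) \/ int_plus m (th * b) \/ int_plus m (th * c)) /\
  (int_minus m (th * a) \/ int_minus m (th * b) \/ int_minus m (th * c)).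
Proof.
  intros Hth. destruct (min_dist3_le_each a b c th) as (Ea & Eb & Ec). rewrite Hth in Ea, Eb, Ec.
  apply dist_int_ge_level in Ea, Eb, Ec.
  split; apply NNPP; intros Hn.
  - destruct (min_dist3_exceeds_left a b c th m) as [t' Ht']; auto; [tauto|tauto|tauto|].
    specialize (Hmax t'). lra.
  - destruct (min_dist3_exceeds_right a b c th m) as [t' Ht']; auto; [tauto|tauto|tauto|].
    specialize (Hmax t'). lra.
Qed.

Lemma maximum_two_strict_one_level t :
  m < dist_int (t * a) -> m < dist_int (t * b) -> m <= dist_int (t * c) -> False.
Proof.
  intros Ia Ib Ic. apply dist_int_ge_level in Ic. destruct Ic as [Ic|[Ic|Ic]].
  - specialize (Hmax t). unfold min_dist3 in Hmax.
    assert (m < Rmin (Rmin (dist_int (t * a)) (dist_int (t * b))) (dist_int (t * c)))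
      by (apply Rmin_glb_lt; [apply Rmin_glb_lt|]; assumption). lra.
  - destruct (min_dist3_exceeds_right a b c t m) as [t' Ht']; auto. specialize (Hmax t'). lra.
  - destruct (min_dist3_exceeds_left a b c t m) as [t' Ht']; auto. specialize (Hmax t'). lra.
Qed.

End Maximizer.

Section IntegerArithmetic.
Local Open Scope Z_scope.

Definition near (N B x : Z) : Prop := exists k : Z, Z.abs (x - k * N) <= B.

Lemma near_add_mul N B x j : near N B x -> near N B (x + j * N).
Proof.
  intros [k Hk]. exists (k + j).
  replace (x + j * N - (k + j) * N) with (x - k * N) by ring. exact Hk.
Qed.

Lemma near_opp N B x : near N B x -> near N B (- x).
Proof.
  intros [k Hk]. exists (- k). replace (- x - - k * N) with (- (x - k * N)) by ring.
  now rewrite Z.abs_opp.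
Qed.

Lemma progression_window_fixed (x0 d N lo hi K : Z) : 0 < N -> Z.abs d + (hi - lo) < N -> 0 <= K ->
  (forall i, 0 <= i <= K -> exists k, lo <= x0 + i * d - k * N <= hi) ->
  exists k, forall i, 0 <= i <= K -> lo <= x0 + i * d - k * N <= hi.
Proof.
  intros HN Hd HK H. destruct (H 0) as [k0 Hk0]; [lia|]. exists k0.
  enough (Hgen : forall i, 0 <= i -> i <= K -> lo <= x0 + i * d - k0 * N <= hi)
    by (intros i Hi; apply Hgen; lia).
  apply (natlike_ind (fun i => i <= K -> lo <= x0 + i * d - k0 * N <= hi)); [intros _; exact Hk0|].
  intros i Hi IH Hle. destruct (H (Z.succ i)) as [k Hk]; [lia|]. specialize (IH ltac:(lia)).
  (* consecutive terms differ by [d], too little for the window to shift by a multiple of [N] *)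
  assert (Hb : - N < (k - k0) * N < N).
  { replace ((k - k0) * N) with ((x0 + i * d - k0 * N) + d - (x0 + Z.succ i * d - k * N))
      by (unfold Z.succ; ring).
    destruct (Z.abs_spec d) as [[? ?]|[? ?]]; lia. }
  assert (k = k0) as -> by (destruct (Z.lt_total k k0) as [?|[?|?]]; auto; exfalso; nia).
  exact Hk.
Qed.

Lemma progression_window_span (x0 d N lo hi K : Z) : 0 < N -> Z.abs d + (hi - lo) < N -> 0 <= K ->
  (forall i, 0 <= i <= K -> exists k, lo <= x0 + i * d - k * N <= hi) ->
  Z.abs (K * d) <= hi - lo.
Proof.
  intros HN Hd HK H. destruct (progression_window_fixed x0 d N lo hi K HN Hd HK H) as [k Hk].
  pose proof (Hk 0 ltac:(lia)). pose proof (Hk K ltac:(lia)).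
  destruct (Z.abs_spec (K * d)) as [[? ?]|[? ?]]; lia.
Qed.

Lemma two_mul_div2_bounds x : x - 1 <= 2 * (x / 2) <= x.
Proof. pose proof (Z.div_mod x 2 ltac:(lia)). pose proof (Z.mod_pos_bound x 2 ltac:(lia)). lia. Qed.

Section MultiplesNearZero.

Variables n c : Z.
Hypotheses (Hc : 1 <= c) (Hn : 3 * c <= n - 2).

Lemma no_near_multiples_small_step w : 2 <= w <= n - 2 * c + 1 ->
  ~ (forall r, c + 1 <= r <= n - c - 1 -> near n (c - 1) (r * w)).
Proof.
  intros Hw H.
  assert (Hs : Z.abs ((n - 2 * c - 2) * w) <= (c - 1) - (- (c - 1))).
  { apply (progression_window_span ((c + 1) * w) w n); try lia.
    intros i Hi. destruct (H (c + 1 + i) ltac:(lia)) as [k Hk]. exists k.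
    replace ((c + 1) * w + i * w) with ((c + 1 + i) * w) by ring. apply Z.abs_le in Hk. lia. }
  rewrite Z.abs_eq in Hs by nia. nia.
Qed.

Lemma no_near_multiples_half w : n = 2 * w ->
  ~ (forall r, c + 1 <= r <= n - c - 1 -> near n (c - 1) (r * w)).
Proof.
  intros Hw H.
  assert (exists r, c + 1 <= r <= n - c - 1 /\ Z.Odd r) as (r & Hr & h & Hh).
  { destruct (Z.Even_or_Odd c) as [[c' Ec]|[c' Ec]].
    - exists (c + 1). split; [lia|]. exists c'. lia.
    - exists (c + 2). split; [lia|]. exists (c' + 1). lia. }
  destruct (H r Hr) as [k Hk].
  replace (r * w - k * n) with (w * (r - 2 * k)) in Hk by (subst; ring).
  rewrite Z.abs_mul, Z.abs_eq in Hk by lia.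
  assert (1 <= Z.abs (r - 2 * k)) by (destruct (Z.abs_spec (r - 2 * k)); lia).
  nia.
Qed.

Lemma no_near_multiples_large_step w : n - 2 * c + 1 < w -> 2 * w < n ->
  ~ (forall r, c + 1 <= r <= n - c - 1 -> near n (c - 1) (r * w)).
Proof.
  intros Hw1 Hw2 H. set (u := n - 2 * w).
  assert (Hu : 1 <= u <= 4 * c - 4 - n) by (unfold u; lia).
  (* modulo [n], [2 j w = - j u] and [(2 j + 1) w = w - j u]: two progressions of step [u] *)
  set (j0 := (c + 2) / 2). set (j1 := (n - c - 2) / 2). set (K := j1 - j0).
  pose proof (two_mul_div2_bounds (c + 2)). pose proof (two_mul_div2_bounds (n - c - 2)).
  assert (HK : 0 <= K) by (unfold K; lia).
  destruct (progression_window_fixed (j0 * u) u n (- (c - 1)) (c - 1) K) as [kE HE]; try lia.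
  { intros i Hi. destruct (H (2 * (j0 + i)) ltac:(lia)) as [k Hk]. exists (j0 + i - k).
    replace (2 * (j0 + i) * w - k * n) with (- (j0 * u + i * u - (j0 + i - k) * n)) in Hk
      by (unfold u; ring).
    rewrite Z.abs_opp in Hk. apply Z.abs_le in Hk. lia. }
  destruct (progression_window_fixed (w - j0 * u) (- u) n (- (c - 1)) (c - 1) K) as [kO HO];
    try lia.
  { intros i Hi. destruct (H (2 * (j0 + i) + 1) ltac:(lia)) as [k Hk]. exists (k - j0 - i).
    replace ((2 * (j0 + i) + 1) * w - k * n) with (w - j0 * u + i * - u - (k - j0 - i) * n) in Hk
      by (unfold u; ring).
    apply Z.abs_le in Hk. lia. }
  pose proof (HE 0 ltac:(lia)). pose proof (HE K ltac:(lia)).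
  pose proof (HO 0 ltac:(lia)). pose proof (HO K ltac:(lia)).
  assert (HC : Z.abs (w - (kE + kO) * n) <= 2 * c - 2 - K * u).
  { apply Z.abs_le. nia. }
  assert (Hw : w <= Z.abs (w - (kE + kO) * n)).
  { destruct (Z.le_gt_cases (kE + kO) 0);
      destruct (Z.abs_spec (w - (kE + kO) * n)) as [[? ?]|[? ?]]; nia. }
  assert ((2 * K - 1) * u >= 2 * K - 1) by nia.
  unfold K in *. nia.
Qed.

Lemma far_from_multiples r K : c + 1 <= r <= n - c - 1 -> c + 1 <= Z.abs (r - K * n).
Proof.
  intros Hr. destruct (Z.le_gt_cases K 0); destruct (Z.abs_spec (r - K * n)) as [[? ?]|[? ?]]; nia.
Qed.

Lemma no_near_multiples_le_half w : 1 <= w -> 2 * w <= n ->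
  ~ (forall r, c + 1 <= r <= n - c - 1 -> near n (c - 1) (r * w)).
Proof.
  intros Hw1 Hw2 H.
  destruct (Z.eq_dec w 1) as [->|Hw].
  { destruct (H (c + 1) ltac:(lia)) as [k Hk]. pose proof (far_from_multiples (c + 1) k).
    rewrite Z.mul_1_r in Hk. lia. }
  destruct (Z_le_gt_dec w (n - 2 * c + 1)); [exact (no_near_multiples_small_step w ltac:(lia) H)|].
  destruct (Z.eq_dec n (2 * w)); [exact (no_near_multiples_half w ltac:(lia) H)|].
  exact (no_near_multiples_large_step w ltac:(lia) ltac:(lia) H).
Qed.

Lemma no_near_multiples W : ~ (n | W) ->
  ~ (forall r, c + 1 <= r <= n - c - 1 -> near n (c - 1) (r * W)).
Proof.
  intros HW H. set (w := W mod n).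
  assert (EW : W = n * (W / n) + w) by (apply Z.div_mod; lia).
  assert (Hw : 0 < w < n).
  { pose proof (Z.mod_pos_bound W n ltac:(lia)). fold w in H0.
    destruct (Z.eq_dec w 0) as [E|]; [|lia]. exfalso. apply HW. exists (W / n). lia. }
  destruct (Z_le_gt_dec (2 * w) n).
  - apply (no_near_multiples_le_half w); try lia. intros r Hr.
    replace (r * w) with (r * W + - (r * (W / n)) * n) by (rewrite EW at 1; ring).
    now apply near_add_mul, H.
  - apply (no_near_multiples_le_half (n - w)); try lia. intros r Hr.
    replace (r * (n - w)) with (- (r * W) + (r * (W / n) + r) * n) by (rewrite EW at 1; ring).
    now apply near_add_mul, near_opp, H.
Qed.

End MultiplesNearZero.

Lemma near_and_shift_near n c x : 3 * c <= n - 2 ->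
  near (2 * n) (2 * c - 1) x -> near (2 * n) (2 * c - 1) (x + n) ->
  near (2 * n) (4 * c - 2 - n) (2 * x - n).
Proof.
  intros Hn [k0 H0] [k1 H1]. apply Z.abs_le in H0, H1.
  assert (k1 = k0 \/ k1 = k0 + 1) as [->| ->] by nia.
  - exists (2 * k0 - 1). apply Z.abs_le. nia.
  - exists (2 * k0). apply Z.abs_le. nia.
Qed.

Lemma no_near_odd_multiples n c W : 1 <= c -> 3 * c <= n - 2 ->
  ~ (forall r, c + 1 <= r <= n - c - 1 -> near (2 * n) (4 * c - 2 - n) (2 * r * W - n)).
Proof.
  intros Hc Hn H. set (E := 4 * c - 2 - n).
  destruct (H (c + 1) ltac:(lia)) as [k1 Hk1]. destruct (H (c + 2) ltac:(lia)) as [k2 Hk2].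
  fold E in Hk1, Hk2. apply Z.abs_le in Hk1, Hk2.
  set (d := 2 * W - (k2 - k1) * (2 * n)).
  assert (Hd : Z.abs d <= 2 * E) by (apply Z.abs_le; unfold d; lia).
  assert (Hs : Z.abs ((n - 2 * c - 2) * d) <= E - - E).
  { apply (progression_window_span (2 * (c + 1) * W - n - k1 * (2 * n)) d (2 * n)); try lia.
    intros i Hi. destruct (H (c + 1 + i) ltac:(lia)) as [k Hk]. fold E in Hk.
    exists (k - k1 - i * (k2 - k1)). apply Z.abs_le in Hk.
    replace (2 * (c + 1) * W - n - k1 * (2 * n) + i * d - (k - k1 - i * (k2 - k1)) * (2 * n))
      with (2 * (c + 1 + i) * W - n - k * (2 * n)) by (unfold d; ring). lia. }
  rewrite Z.abs_mul, (Z.abs_eq (n - 2 * c - 2)) in Hs by lia.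
  destruct (Z.eq_dec d 0) as [D0|D0].
  - (* then [2 (c + 1) W - n] is an odd multiple of [n] *)
    assert (Eq : 2 * (c + 1) * W - n - k1 * (2 * n) = n * (2 * (c + 1) * (k2 - k1) - 2 * k1 - 1)).
    { assert (2 * W = (k2 - k1) * (2 * n)) by (unfold d in D0; lia). nia. }
    rewrite Eq in Hk1.
    destruct (Z.le_gt_cases (2 * (c + 1) * (k2 - k1) - 2 * k1 - 1) 0); nia.
  - assert (Z.abs d >= 2).
    { assert (d = 2 * (W - (k2 - k1) * n)) by (unfold d; ring).
      destruct (Z.abs_spec d) as [[? ?]|[? ?]]; lia. }
    nia.
Qed.

Lemma no_near_mod_double n c W z : 1 <= c -> 3 * c <= n - 2 -> Z.Odd z ->
  ~ (forall r j, c + 1 <= r <= n - c - 1 -> near (2 * n) (2 * c - 1) (r * W + j * z * n)).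
Proof.
  intros Hc Hn [z' Ez] H. apply (no_near_odd_multiples n c W Hc Hn). intros r Hr.
  replace (2 * r * W - n) with (2 * (r * W) - n) by ring.
  apply near_and_shift_near; [lia| |].
  - pose proof (H r 0 Hr) as H0. rewrite Z.mul_0_l, Z.add_0_r in H0. exact H0.
  - pose proof (near_add_mul _ _ _ (- z') (H r 1 Hr)) as H1.
    replace (r * W + 1 * z * n + - z' * (2 * n)) with (r * W + n) in H1 by (rewrite Ez; ring).
    exact H1.
Qed.

Lemma no_near_coset g n c z X0 : 3 <= g -> 1 <= c -> 3 * c <= n - 2 -> Z.gcd g z = 1 ->
  ~ (forall j, near (g * n) (g * c - 1) (X0 + j * z * n)).
Proof.
  intros Hg Hc Hn Hgz H. destruct (Z.gcd_bezout g z 1 Hgz) as (al & be & Hbez).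
  set (Q := X0 / n). set (rho := X0 mod n).
  assert (HX0 : X0 = n * Q + rho) by (apply Z.div_mod; lia).
  assert (Hrho : 0 <= rho < n) by (apply Z.mod_pos_bound; lia).
  (* [T] puts [X := rho + T n] within [n/2] of [g n / 2], as far as possible from [g n Z] *)
  set (T := (g * n + n - 2 * rho) / (2 * n)). set (X := rho + n * T).
  assert (HT : 2 * n * T <= g * n + n - 2 * rho < 2 * n * T + 2 * n).
  { pose proof (Z.div_mod (g * n + n - 2 * rho) (2 * n) ltac:(lia)) as E.
    pose proof (Z.mod_pos_bound (g * n + n - 2 * rho) (2 * n) ltac:(lia)). fold T in E. lia. }
  destruct (H ((T - Q) * be)) as [k Hk].
  (* since [be z = 1 - al g], the shift [(T - Q) be z n] is [(T - Q) n] modulo [g n] *)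
  replace ((T - Q) * be * z * n) with ((T - Q) * (be * z) * n) in Hk by ring.
  replace (be * z) with (1 - al * g) in Hk by lia.
  replace (X0 + (T - Q) * (1 - al * g) * n - k * (g * n))
    with (X - (k + (T - Q) * al) * (g * n)) in Hk by (unfold X; rewrite HX0; ring).
  set (K := k + (T - Q) * al) in Hk. apply Z.abs_le in Hk.
  assert (g * (n - 2 * c) >= 3 * (n - 2 * c)) by nia.
  destruct (Z.le_gt_cases K 0).
  - assert (K * (g * n) <= 0) by nia. unfold X in *. lia.
  - assert (K * (g * n) >= g * n) by nia. unfold X in *. lia.
Qed.

Lemma no_rational_maximizer (g a b z c L : Z) :
  0 < g -> 0 < a -> 0 < b -> 0 < z -> Z.gcd a b = 1 -> Z.gcd g z = 1 ->
  1 <= c -> 3 * c <= a + b - 2 -> (exists p, L * a - p * (a + b) = c) ->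
  ~ near (g * (a + b)) (g * c - 1) (L * z) ->
  ~ (forall L', (forall k, c + 1 <= Z.abs (L' * a - k * (a + b))) ->
                near (g * (a + b)) (g * c - 1) (L' * z)).
Proof.
  intros Hg Ha Hb Hz Hab Hgz Hc Hcn [p Hp] HL H. set (n := a + b) in *.
  destruct (Z.gcd_bezout a b 1 Hab) as (al & be & Hbez).
  set (u := al - be). set (W := u * z).
  assert (Hu : u * a = 1 - be * n) by (unfold u, n; lia).
  (* [(r u + j n) a = r] modulo [n], as [u] inverts [a] modulo [n] *)
  assert (Hr : forall r j, c + 1 <= r <= n - c - 1 -> near (g * n) (g * c - 1) (r * W + j * z * n)).
  { intros r j Hrange. replace (r * W + j * z * n) with ((r * u + j * n) * z) by (unfold W; ring).
    apply H. intros k.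
    replace ((r * u + j * n) * a - k * n) with (r - (k + r * be - j * a) * n)
      by (rewrite Z.mul_add_distr_r, <- Z.mul_assoc, Hu; ring).
    now apply far_from_multiples. }
  destruct (Z.lt_total g 2) as [Hg1|[->|Hg3]].
  - assert (g = 1) as -> by lia.
    apply (no_near_multiples n c Hc Hcn W).
    + (* [L z = c W] modulo [n], so [n | W] would make [L z] a multiple of [n] *)
      intros [q Hq]. apply HL. exists (c * q + (u * p + L * be) * z).
      assert (HLz : L * z = c * W + (u * p + L * be) * z * n).
      { rewrite <- (Z.mul_1_r (L * z)) at 1. replace 1 with (u * a + be * n) by lia.
        rewrite <- Hp. unfold W. ring. }
      rewrite HLz, Hq. replace (_ - _) with 0 by ring. lia.
    + intros r Hrange. destruct (Hr r 0 Hrange) as [k Hk]. exists k.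
      rewrite !Z.mul_1_l, Z.mul_0_l, Z.add_0_r in Hk. exact Hk.
  - apply (no_near_mod_double n c W z Hc Hcn); [|exact Hr].
    destruct (Z.Even_or_Odd z) as [[z' Ez]|]; auto.
    assert (H2 : (2 | Z.gcd 2 z)) by (apply Z.gcd_greatest; [exists 1|exists z']; lia).
    rewrite Hgz in H2. destruct H2 as [k Hk]. lia.
  - apply (no_near_coset g n c z ((c + 1) * W)); try lia.
    intros j. apply Hr. lia.
Qed.

End IntegerArithmetic.

Lemma Rabs_IZR_div_sub (N D k : Z) : (0 < D)%Z ->
  Rabs (IZR N / IZR D - IZR k) = IZR (Z.abs (N - k * D)) / IZR D.
Proof.
  intros HD. assert (RD : 0 < IZR D) by (apply IZR_lt; lia).
  rewrite abs_IZR, minus_IZR, mult_IZR.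
  replace (IZR N / IZR D - IZR k) with ((IZR N - IZR k * IZR D) / IZR D) by (field; lra).
  unfold Rdiv. rewrite Rabs_mult, Rabs_inv, (Rabs_right (IZR D)) by lra. reflexivity.
Qed.

Lemma dist_int_div_le (N D B : Z) : (0 < D)%Z -> near D B N ->
  dist_int (IZR N / IZR D) <= IZR B / IZR D.
Proof.
  intros HD [k Hk]. eapply Rle_trans; [apply (dist_int_le _ k)|].
  rewrite Rabs_IZR_div_sub by exact HD. unfold Rdiv.
  apply Rmult_le_compat_r; [left; apply Rinv_0_lt_compat, IZR_lt, HD|]. now apply IZR_le.
Qed.

Lemma dist_int_div_ge (N D B : Z) : (0 < D)%Z -> (forall k, B <= Z.abs (N - k * D))%Z ->
  IZR B / IZR D <= dist_int (IZR N / IZR D).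
Proof.
  intros HD H. apply dist_int_glb. intros k. rewrite Rabs_IZR_div_sub by exact HD. unfold Rdiv.
  apply Rmult_le_compat_r; [left; apply Rinv_0_lt_compat, IZR_lt, HD|]. now apply IZR_le.
Qed.

Lemma maximizer_rational (g a b p q : Z) th m : (0 < g)%Z -> (0 < a)%Z -> (0 < b)%Z ->
  th * IZR (g * a) = IZR p + m -> th * IZR (g * b) = IZR q - m ->
  th = IZR (p + q) / IZR (g * (a + b)) /\ m = IZR ((p + q) * a - p * (a + b)) / IZR (a + b).
Proof.
  intros Hg Ha Hb Ep Eq. assert (Rg : 0 < IZR g) by (apply IZR_lt; lia).
  assert (Ra : 0 < IZR a) by (apply IZR_lt; lia). assert (Rb : 0 < IZR b) by (apply IZR_lt; lia).
  rewrite mult_IZR in Ep, Eq. repeat rewrite ?mult_IZR, ?plus_IZR, ?minus_IZR.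
  assert (Hsum : th * (IZR g * (IZR a + IZR b)) = IZR p + IZR q)
    by (replace (th * (IZR g * (IZR a + IZR b))) with (th * (IZR g * IZR a) + th * (IZR g * IZR b))
          by ring; lra).
  assert (Eth : th = (IZR p + IZR q) / (IZR g * (IZR a + IZR b))).
  { rewrite <- Hsum. field. lra. }
  split; [exact Eth|].
  replace m with (th * (IZR g * IZR a) - IZR p) by lra. rewrite Eth. field. lra.
Qed.

Section SpeedsWithCommonFactor.

Variables (g a b z : Z) (m : R).
Hypotheses (Hg : (0 < g)%Z) (Ha : (0 < a)%Z) (Hb : (0 < b)%Z) (Hz : (0 < z)%Z).
Hypothesis Hmax : forall t, min_dist3 (IZR (g * a)) (IZR (g * b)) (IZR z) t <= m.

Lemma not_near_at_maximizer c L : m = IZR c / IZR (a + b) ->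
  min_dist3 (IZR (g * a)) (IZR (g * b)) (IZR z) (IZR L / IZR (g * (a + b))) = m ->
  ~ near (g * (a + b)) (g * c - 1) (L * z).
Proof.
  intros Hmc Hth Hnear.
  assert (RM : 0 < IZR (g * (a + b))) by (apply IZR_lt; nia).
  destruct (min_dist3_le_each (IZR (g * a)) (IZR (g * b)) (IZR z) (IZR L / IZR (g * (a + b))))
    as (_ & _ & Hd).
  replace (IZR L / IZR (g * (a + b)) * IZR z) with (IZR (L * z) / IZR (g * (a + b))) in Hd
    by (rewrite mult_IZR; field; lra).
  pose proof (dist_int_div_le (L * z) (g * (a + b)) (g * c - 1) ltac:(nia) Hnear).
  assert (IZR (g * c - 1) / IZR (g * (a + b)) < m).
  { replace (IZR (g * c - 1) / IZR (g * (a + b))) with (m - / IZR (g * (a + b))).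
    - pose proof (Rinv_0_lt_compat _ RM). lra.
    - assert (0 < IZR (a + b)) by (apply IZR_lt; lia). assert (0 < IZR g) by (apply IZR_lt; lia).
      rewrite Hmc, minus_IZR, !mult_IZR. field. split; lra. }
  lra.
Qed.

Lemma near_of_maximality c L' : 0 < m < 1/2 -> m = IZR c / IZR (a + b) ->
  (forall k, c + 1 <= Z.abs (L' * a - k * (a + b)))%Z -> near (g * (a + b)) (g * c - 1) (L' * z).
Proof.
  intros Hm Hmc Hfar. apply NNPP. intros Hnear.
  assert (Rg : 0 < IZR g) by (apply IZR_lt; lia).
  assert (Rn : 0 < IZR (a + b)) by (apply IZR_lt; lia).
  set (t := IZR L' / IZR (g * (a + b))).
  assert (Dx : IZR (c + 1) / IZR (a + b) <= dist_int (t * IZR (g * a))).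
  { replace (t * IZR (g * a)) with (IZR (L' * a) / IZR (a + b))
      by (unfold t; rewrite !mult_IZR; field; lra).
    apply dist_int_div_ge; [lia|exact Hfar]. }
  assert (Dy : IZR (c + 1) / IZR (a + b) <= dist_int (t * IZR (g * b))).
  { replace (t * IZR (g * b)) with (- (t * IZR (g * a)) + IZR L')
      by (unfold t; rewrite !mult_IZR, plus_IZR; field; rewrite plus_IZR in Rn; repeat split; lra).
    now rewrite dist_int_add_IZR, dist_int_opp. }
  assert (Dz : m <= dist_int (t * IZR z)).
  { replace m with (IZR (g * c) / IZR (g * (a + b)))
      by (rewrite Hmc, !mult_IZR; field; repeat split; lra).
    replace (t * IZR z) with (IZR (L' * z) / IZR (g * (a + b)))
      by (unfold t; rewrite !mult_IZR; field; repeat split; lra).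
    apply dist_int_div_ge; [nia|]. intros k. apply Z.nlt_ge. intros Hk.
    apply Hnear. exists k. lia. }
  assert (Hc1 : m < IZR (c + 1) / IZR (a + b)).
  { rewrite Hmc, (plus_IZR c 1). unfold Rdiv.
    apply Rmult_lt_compat_r; [now apply Rinv_0_lt_compat|lra]. }
  apply (maximum_two_strict_one_level (IZR (g * a)) (IZR (g * b)) (IZR z) m) with t;
    try (apply IZR_lt; nia); try assumption; lra.
Qed.

Lemma ML3_common_factor_values th p q : Z.gcd a b = 1%Z -> Z.gcd g z = 1%Z ->
  min_dist3 (IZR (g * a)) (IZR (g * b)) (IZR z) th = m -> 0 < m < 1/3 ->
  th * IZR (g * a) = IZR p + m -> th * IZR (g * b) = IZR q - m ->
  exists s : Z, (1 <= s)%Z /\ m = IZR s / (3 * IZR s + 1).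
Proof.
  intros Hab Hgz Hth Hm Ep Eq.
  destruct (maximizer_rational g a b p q th m Hg Ha Hb Ep Eq) as [Eth Emc].
  set (c := ((p + q) * a - p * (a + b))%Z) in Emc.
  assert (Rn : 0 < IZR (a + b)) by (apply IZR_lt; lia).
  assert (Ec : IZR c = m * IZR (a + b)) by (rewrite Emc; field; lra).
  assert (Hc1 : (1 <= c)%Z) by (cut (0 < c)%Z; [lia|apply lt_IZR; rewrite Ec; nra]).
  assert (Hc3 : (3 * c < a + b)%Z) by (apply lt_IZR; rewrite mult_IZR, Ec; nra).
  destruct (Z.eq_dec (a + b) (3 * c + 1)) as [En|En].
  - exists c. split; [exact Hc1|]. rewrite Emc, En, plus_IZR, mult_IZR. reflexivity.
  - exfalso. rewrite Eth in Hth.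
    apply (no_rational_maximizer g a b z c (p + q)); try assumption; try lia.
    + exists p. reflexivity.
    + now apply not_near_at_maximizer.
    + intros L' Hfar. apply near_of_maximality; [lra|exact Emc|exact Hfar].
Qed.

End SpeedsWithCommonFactor.

Lemma min_dist3_swap12 a b c t : min_dist3 a b c t = min_dist3 b a c t.
Proof. unfold min_dist3, Rmin. repeat destruct Rle_dec; lra. Qed.

Lemma min_dist3_swap23 a b c t : min_dist3 a b c t = min_dist3 a c b t.
Proof. unfold min_dist3, Rmin. repeat destruct Rle_dec; lra. Qed.

Lemma min_dist3_scale (d x y z : Z) t :
  min_dist3 (IZR (d * x)) (IZR (d * y)) (IZR (d * z)) t =
  min_dist3 (IZR x) (IZR y) (IZR z) (t * IZR d).
Proof. unfold min_dist3. rewrite !mult_IZR, <- !Rmult_assoc. reflexivity. Qed.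

Lemma min_dist3_pos_somewhere a b c : 0 < a -> 0 < b -> 0 < c -> exists t, 0 < min_dist3 a b c t.
Proof.
  intros Ha Hb Hc. set (t := / (2 * (a + b + c))).
  assert (Ht : 0 < t) by (apply Rinv_0_lt_compat; lra).
  assert (Hv : forall v, 0 < v <= a + b + c -> dist_int (t * v) = t * v).
  { intros v Hv. rewrite <- (Rplus_0_l (t * v)) at 1. apply (dist_int_IZR_add_small 0).
    split; [nra|]. apply Rmult_le_reg_l with (2 * (a + b + c)); [lra|].
    unfold t. rewrite <- Rmult_assoc, Rinv_r; lra. }
  exists t. unfold min_dist3. rewrite !Hv by lra.
  apply Rmin_glb_lt; [apply Rmin_glb_lt|]; nra.
Qed.

Lemma gcd3_factor X Y W : (0 < X)%Z -> (0 < Y)%Z -> (0 < W)%Z ->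
  exists d x y z, (0 < d)%Z /\ (0 < x)%Z /\ (0 < y)%Z /\ (0 < z)%Z /\
    X = (d * x)%Z /\ Y = (d * y)%Z /\ W = (d * z)%Z /\ Z.gcd (Z.gcd x y) z = 1%Z.
Proof.
  intros HX HY HW. set (d := Z.gcd (Z.gcd X Y) W).
  assert (Hd : (0 < d)%Z).
  { pose proof (Z.gcd_nonneg (Z.gcd X Y) W). destruct (Z.eq_dec d 0) as [E|E]; [|lia].
    apply Z.gcd_eq_0 in E. destruct E as [E _]. apply Z.gcd_eq_0 in E. lia. }
  assert (D1 : (d | X)%Z) by (eapply Z.divide_trans; [apply Z.gcd_divide_l|apply Z.gcd_divide_l]).
  assert (D2 : (d | Y)%Z) by (eapply Z.divide_trans; [apply Z.gcd_divide_l|apply Z.gcd_divide_r]).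
  assert (D3 : (d | W)%Z) by apply Z.gcd_divide_r.
  destruct D1 as [x Hx], D2 as [y Hy], D3 as [z Hz].
  exists d, x, y, z. assert (0 < x)%Z by nia. assert (0 < y)%Z by nia. assert (0 < z)%Z by nia.
  repeat split; try lia.
  assert (E : d = (d * Z.gcd (Z.gcd x y) z)%Z).
  { unfold d at 1. rewrite Hx, Hy, Hz, !(Z.mul_comm _ d).
    rewrite Z.gcd_mul_mono_l, Z.abs_eq by lia.
    rewrite Z.gcd_mul_mono_l, Z.abs_eq by lia. reflexivity. }
  pose proof (Z.gcd_nonneg (Z.gcd x y) z). nia.
Qed.

Lemma gcd3_swap12 a b c : Z.gcd (Z.gcd a b) c = Z.gcd (Z.gcd b a) c.
Proof. now rewrite (Z.gcd_comm a b). Qed.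

Lemma gcd3_swap23 a b c : Z.gcd (Z.gcd a b) c = Z.gcd (Z.gcd a c) b.
Proof. now rewrite <- !Z.gcd_assoc, (Z.gcd_comm b c). Qed.

Lemma ML3_crossing_values (u v w p q : Z) m th : (0 < u)%Z -> (0 < v)%Z -> (0 < w)%Z ->
  Z.gcd (Z.gcd u v) w = 1%Z -> (forall t, min_dist3 (IZR u) (IZR v) (IZR w) t <= m) ->
  min_dist3 (IZR u) (IZR v) (IZR w) th = m -> 0 < m < 1/3 ->
  th * IZR u = IZR p + m -> th * IZR v = IZR q - m ->
  exists s : Z, (1 <= s)%Z /\ m = IZR s / (3 * IZR s + 1).
Proof.
  intros Hu Hv Hw Hgcd Hmax Hth Hm Ep Eq.
  destruct (gcd_factor u v Hu Hv) as (g & a & b & Hg & Ha & Hb & -> & -> & Hab & Eg).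
  rewrite <- Eg in Hgcd.
  now apply (ML3_common_factor_values g a b w m Hg Ha Hb Hw Hmax th p q).
Qed.

Lemma ML3_coprime_values (x y z : Z) m th : (0 < x)%Z -> (0 < y)%Z -> (0 < z)%Z ->
  Z.gcd (Z.gcd x y) z = 1%Z -> (forall t, min_dist3 (IZR x) (IZR y) (IZR z) t <= m) ->
  min_dist3 (IZR x) (IZR y) (IZR z) th = m -> 0 < m < 1/3 ->
  exists s : Z, (1 <= s)%Z /\ m = IZR s / (3 * IZR s + 1).
Proof.
  intros Hx Hy Hz Hgcd Hmax Hth Hm.
  assert (Hperm : forall u v w, (0 < u)%Z -> (0 < v)%Z -> (0 < w)%Z ->
    Z.gcd (Z.gcd u v) w = 1%Z ->
    (forall t, min_dist3 (IZR u) (IZR v) (IZR w) t = min_dist3 (IZR x) (IZR y) (IZR z) t) ->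
    forall p q, th * IZR u = IZR p + m -> th * IZR v = IZR q - m ->
    exists s : Z, (1 <= s)%Z /\ m = IZR s / (3 * IZR s + 1)).
  { intros u v w Hu Hv Hw Hg Ht p q Ep Eq.
    apply (ML3_crossing_values u v w p q m th); try assumption.
    - intros t. rewrite Ht. apply Hmax.
    - now rewrite Ht. }
  destruct (maximizer_levels (IZR x) (IZR y) (IZR z) m) with th as [HP HN];
    try (apply IZR_lt; assumption); try assumption; try lra.
  destruct HP as [[p Hp]|[[p Hp]|[p Hp]]]; destruct HN as [[q Hq]|[[q Hq]|[q Hq]]];
    try (exfalso; eapply int_plus_minus_exclusive;
         [|exists p; exact Hp|exists q; exact Hq]; lra).
  - apply (Hperm x y z) with p q; auto.
  - apply (Hperm x z y) with p q; auto.
    + now rewrite <- gcd3_swap23.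
    + intros t. now rewrite <- min_dist3_swap23.
  - apply (Hperm y x z) with p q; auto.
    + now rewrite <- gcd3_swap12.
    + intros t. now rewrite <- min_dist3_swap12.
  - apply (Hperm y z x) with p q; auto.
    + now rewrite <- gcd3_swap23, <- gcd3_swap12.
    + intros t. now rewrite <- min_dist3_swap23, <- min_dist3_swap12.
  - apply (Hperm z x y) with p q; auto.
    + now rewrite <- gcd3_swap12, <- gcd3_swap23.
    + intros t. now rewrite <- min_dist3_swap12, <- min_dist3_swap23.
  - apply (Hperm z y x) with p q; auto.
    + now rewrite <- gcd3_swap12, <- gcd3_swap23, <- gcd3_swap12.
    + intros t. now rewrite <- min_dist3_swap12, <- min_dist3_swap23, <- min_dist3_swap12.
Qed.

Lemma ML3_values (X Y W : Z) m : (0 < X)%Z -> (0 < Y)%Z -> (0 < W)%Z ->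
  (exists t, min_dist3 (IZR X) (IZR Y) (IZR W) t = m) ->
  (forall t, min_dist3 (IZR X) (IZR Y) (IZR W) t <= m) ->
  (exists s : Z, (1 <= s)%Z /\ m = IZR s / (3 * IZR s + 1)) \/ m >= 1/3.
Proof.
  intros HX HY HW [th Hth] Hmax0.
  destruct (Rlt_or_le m (1/3)) as [Hm3|Hm3]; [left|right; lra].
  destruct (gcd3_factor X Y W HX HY HW)
    as (d & x & y & z & Hd & Hx & Hy & Hz & -> & -> & -> & Hgcd).
  assert (Rd : 0 < IZR d) by (apply IZR_lt; lia).
  rewrite min_dist3_scale in Hth.
  assert (Hmax : forall t, min_dist3 (IZR x) (IZR y) (IZR z) t <= m).
  { intros t. specialize (Hmax0 (t / IZR d)). rewrite min_dist3_scale in Hmax0.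
    replace (t / IZR d * IZR d) with t in Hmax0 by (field; lra). exact Hmax0. }
  assert (Hm0 : 0 < m).
  { destruct (min_dist3_pos_somewhere (IZR x) (IZR y) (IZR z)) as [t Ht];
      try (apply IZR_lt; assumption).
    specialize (Hmax t). lra. }
  apply (ML3_coprime_values x y z m (th * IZR d)); auto; lra.
Qed.

Lemma nat_of_Z_witness (f : R -> R) m :
  (exists s : Z, (1 <= s)%Z /\ m = f (IZR s)) -> exists s : nat, (1 <= s)%nat /\ m = f (INR s).
Proof.
  intros (s & Hs & ->). exists (Z.to_nat s). split; [lia|].
  now rewrite INR_IZR_INZ, Z2Nat.id by lia.
Qed.

Lemma min_dist_pair t (v1 v2 : nat) :
  min_dist t (v1 :: v2 :: nil) = min_dist2 (IZR (Z.of_nat v1)) (IZR (Z.of_nat v2)) t.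
Proof. now rewrite <- !INR_IZR_INZ. Qed.

Lemma min_dist_triple t (v1 v2 v3 : nat) : min_dist t (v1 :: v2 :: v3 :: nil) =
  min_dist3 (IZR (Z.of_nat v1)) (IZR (Z.of_nat v2)) (IZR (Z.of_nat v3)) t.
Proof. now rewrite <- !INR_IZR_INZ. Qed.

Lemma ML2_nat_values (v1 v2 : nat) m : (0 < v1)%nat -> (0 < v2)%nat -> is_ML (v1 :: v2 :: nil) m ->
  (exists s : nat, (1 <= s)%nat /\ m = INR s / (2 * INR s + 1)) \/ m = 1 / 2.
Proof.
  intros H1 H2 [[th Hth] Hmax]. rewrite min_dist_pair in Hth.
  assert (Hatt : exists t, min_dist2 (IZR (Z.of_nat v1)) (IZR (Z.of_nat v2)) t = m)
    by now exists th.
  assert (Hmax2 : forall t, min_dist2 (IZR (Z.of_nat v1)) (IZR (Z.of_nat v2)) t <= m)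
    by (intros t; rewrite <- min_dist_pair; apply Hmax).
  destruct (ML2_values (Z.of_nat v1) (Z.of_nat v2) m ltac:(lia) ltac:(lia) Hatt Hmax2) as [Hs|Hs].
  - left. exact (nat_of_Z_witness (fun x => x / (2 * x + 1)) m Hs).
  - now right.
Qed.

Lemma ML3_nat_values (v1 v2 v3 : nat) m : (0 < v1)%nat -> (0 < v2)%nat -> (0 < v3)%nat ->
  is_ML (v1 :: v2 :: v3 :: nil) m ->
  (exists s : nat, (1 <= s)%nat /\ m = INR s / (3 * INR s + 1)) \/ m >= 1 / 3.
Proof.
  intros H1 H2 H3 [[th Hth] Hmax]. rewrite min_dist_triple in Hth.
  assert (Hatt : exists t,
    min_dist3 (IZR (Z.of_nat v1)) (IZR (Z.of_nat v2)) (IZR (Z.of_nat v3)) t = m) by now exists th.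
  assert (Hmax3 : forall t,
    min_dist3 (IZR (Z.of_nat v1)) (IZR (Z.of_nat v2)) (IZR (Z.of_nat v3)) t <= m)
    by (intros t; rewrite <- min_dist_triple; apply Hmax).
  destruct (ML3_values (Z.of_nat v1) (Z.of_nat v2) (Z.of_nat v3) m ltac:(lia) ltac:(lia) ltac:(lia)
              Hatt Hmax3) as [Hs|Hs].
  - left. exact (nat_of_Z_witness (fun x => x / (3 * x + 1)) m Hs).
  - now right.
Qed.

Theorem theorem2p1 :
  (forall v1 v2 : nat, (0 < v1)%nat -> (0 < v2)%nat ->
     (exists m, is_ML (v1 :: v2 :: nil) m) /\
     (forall m, is_ML (v1 :: v2 :: nil) m ->
        (exists s : nat, (1 <= s)%nat /\ m = INR s / (2 * INR s + 1)) \/ m = 1 / 2))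
  /\
  (forall v1 v2 v3 : nat, (0 < v1)%nat -> (0 < v2)%nat -> (0 < v3)%nat ->
     (exists m, is_ML (v1 :: v2 :: v3 :: nil) m) /\
     (forall m, is_ML (v1 :: v2 :: v3 :: nil) m ->
        (exists s : nat, (1 <= s)%nat /\ m = INR s / (3 * INR s + 1)) \/ m >= 1 / 3)).
Proof.
  split.
  - intros v1 v2 H1 H2. split; [apply ML_exists|]. intros m. now apply ML2_nat_values.
  - intros v1 v2 v3 H1 H2 H3. split; [apply ML_exists|]. intros m. now apply ML3_nat_values.
Qed.
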